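(* Under the setting and assumptions in the context, if $\Pr(Y(0)=1)>0$, then $$APCE_{AH}=\frac{\Pr(R=0,Y=1\mid Z=0)-\Pr(R=0,Y=1\mid Z=1)}{\Pr(Y(0)=1)}.$$
   Context: Units are drawn from a population (a probability space). Each unit has a binary assignment $Z\in\{0,1\}$ with $0<\Pr(Z=1)<1$, binary potential recommendations $R(0),R(1)\in\{0,1\}$, and binary potential outcomes $Y(0),Y(1)\in\{0,1\}$ indexed by the recommendation only (exclusion restriction). Observed quantities are $R=R(Z)$ and $Y=Y(R(Z))$. Assumptions: (Randomization) $Z$ is independent of $(R(0),R(1),Y(0),Y(1))$; (Monotonicity) $Y(1)\ge Y(0)$ almost surely. Principal strata: Always Low $AL=\{Y(0)=Y(1)=0\}$, Always High $AH=\{Y(0)=Y(1)=1\}$, Helpable $H=\{Y(0)=0,Y(1)=1\}$. For a stratum $J$ with positive probability, $APCE_J=E[R(1)-R(0)\mid J]$. *)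

From HB Require Import structures.
From mathcomp Require Import all_boot all_order all_algebra.
From mathcomp Require Import all_classical all_reals all_analysis.
Set Implicit Arguments. Unset Strict Implicit. Unset Printing Implicit Defensive.
Import Order.TTheory GRing.Theory Num.Theory.
Local Open Scope classical_set_scope.
Local Open Scope ring_scope.

Section Defs.
Context {d : measure_display} {T : measurableType d} {R : realType}.

Definition pr (P : probability T R) (A : set T) : R := fine (P A).

Definition condpr (P : probability T R) (A C : set T) : R :=
  pr P (A `&` C) / pr P C.

Definition cond_exp (P : probability T R) (X : T -> R) (J : set T) : R :=
  fine (\int[P]_(t in J) (X t)%:E)%E / pr P J.

Definition indep_rv {U V : Type} (P : probability T R) (Z : T -> U) (W : T -> V) :=
  forall (A : set U) (B : set V),
    P (Z @^-1` A `&` W @^-1` B) = (P (Z @^-1` A) * P (W @^-1` B))%E.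

Definition bin_rv (X : T -> bool) := measurable [set t | X t].

(* observed recommendation R = R(Z) and outcome Y = Y(R(Z)) *)
Definition obsR (Z R0 R1 : T -> bool) (t : T) : bool :=
  if Z t then R1 t else R0 t.
Definition obsY (Z R0 R1 Y0 Y1 : T -> bool) (t : T) : bool :=
  if obsR Z R0 R1 t then Y1 t else Y0 t.

Definition AH (Y0 Y1 : T -> bool) : set T := [set t | Y0 t /\ Y1 t].

Definition APCE (P : probability T R) (R0 R1 : T -> bool) (J : set T) : R :=
  cond_exp P (fun t => (R1 t : nat)%:R - (R0 t : nat)%:R) J.
End Defs.

(* Monotonicity makes the stratum AH equal to {Y(0) = 1} up to a null set, so
   APCE_AH = (Pr(Y(0) = 1, R(1) = 1) - Pr(Y(0) = 1, R(0) = 1)) / Pr(Y(0) = 1).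
   On the arm Z = b the observed event {R = 0, Y = 1} is {R(b) = 0, Y(0) = 1}
   (exclusion restriction), an event of the potential variables alone, so by
   randomization its probability given Z = b is Pr(Y(0) = 1, R(b) = 0).
   Subtracting the two arms gives the same numerator. *)
From HB Require Import structures.
From mathcomp Require Import all_boot all_order all_algebra.
From mathcomp Require Import all_classical all_reals all_analysis.
From mathcomp Require Import lra.
Import Order.TTheory GRing.Theory Num.Theory.
Local Open Scope classical_set_scope.
Local Open Scope ring_scope.

Section probability_facts.
Context {d : measure_display} {T : measurableType d} {R : realType}.
Variable P : probability T R.

Lemma prE {A : set T} : measurable A -> P A = (pr P A)%:E.
Proof. by move=> mA; rewrite /pr fineK // fin_num_measure. Qed.

Lemma pr_ge0 (A : set T) : 0 <= pr P A.
Proof. exact/fine_ge0/measure_ge0. Qed.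

Lemma pr_setDI {A B : set T} : measurable A -> measurable B ->
  pr P A = pr P (A `\` B) + pr P (A `&` B).
Proof.
move=> mA mB; apply: EFin_inj.
rewrite EFinD -!prE //; [exact: measureDI | exact: measurableI | exact: measurableD].
Qed.

Lemma pr_setC {A : set T} : measurable A -> pr P (~` A) = 1 - pr P A.
Proof.
move=> mA; apply: EFin_inj.
by rewrite EFinB -!prE ?probability_setC //; exact: measurableC.
Qed.

Lemma pr_setI_null_setD {C A B : set T} :
  measurable C -> measurable A -> measurable B -> pr P (A `\` B) = 0 ->
  pr P (C `&` (A `&` B)) = pr P (C `&` A).
Proof.
move=> mC mA mB nullAB; have mCA := measurableI _ _ mC mA.
have mCAB := measurableD mCA mB; have mAB := measurableD mA mB.
have null : pr P ((C `&` A) `\` B) = 0.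
  apply/eqP; rewrite eq_le pr_ge0 andbT -nullAB -lee_fin -!prE //.
  by apply: le_measure; rewrite ?inE // => t [[]].
by rewrite (pr_setDI mCA mB) null add0r setIA.
Qed.

Lemma cond_exp_natB (f g : T -> bool) (J : set T) : measurable J ->
  measurable [set t | f t] -> measurable [set t | g t] ->
  cond_exp P (fun t => (f t : nat)%:R - (g t : nat)%:R) J =
  (pr P ([set t | f t] `&` J) - pr P ([set t | g t] `&` J)) / pr P J.
Proof.
move=> mJ mf mg; rewrite /cond_exp; congr (_ / _).
have nat_indicE t (h : T -> bool) : (h t : nat)%:R = \1_[set u | h u] t :> R.
  by rewrite indicE (_ : t \in _ = h t) //; apply/idP/idP; rewrite in_setE.
rewrite (eq_integral
  (fun t => (\1_[set t | f t] t)%:E - (\1_[set t | g t] t)%:E)%E); last by move=> t _; rewrite -EFinB !nat_indicE.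
have integrable_indic_J h : measurable [set t | h t] ->
    P.-integrable J (EFin \o \1_[set t | h t]).
  by move=> mh; exact: integrableS measurableT mJ (@subsetT _ _)
                         (integrable_indic P mh).
rewrite integralB_EFin ?integrable_indic_J // !integral_indic //.
by rewrite fineB ?fin_num_measure //; exact: measurableI.
Qed.

Lemma condpr_indep_rv {U V : Type} (Z : T -> U) (W : T -> V)
  (A : set U) (B : set V) :
  indep_rv P Z W -> measurable (Z @^-1` A) -> measurable (W @^-1` B) ->
  pr P (Z @^-1` A) != 0 -> condpr P (W @^-1` B) (Z @^-1` A) = pr P (W @^-1` B).
Proof.
move=> indep mZA mWB pZA; rewrite /condpr setIC.
have -> : pr P (Z @^-1` A `&` W @^-1` B) = pr P (Z @^-1` A) * pr P (W @^-1` B).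
  by rewrite /pr indep (prE mZA) (prE mWB).
by rewrite mulrAC divff // mul1r.
Qed.

End probability_facts.

Lemma preimage_bool_false {T : Type} (X : T -> bool) :
  X @^-1` [set false] = ~` [set t | X t].
Proof. by apply/seteqP; split=> t /=; case: (X t). Qed.

Lemma bin_rv_preimage {d : measure_display} {T : measurableType d}
  {X : T -> bool} (b : bool) : bin_rv X -> measurable (X @^-1` [set b]).
Proof. by case: b => // mX; rewrite preimage_bool_false; exact: measurableC. Qed.

Section encouragement_design.
Context {d : measure_display} {T : measurableType d} {R : realType}.
Variables (P : probability T R) (Z R0 R1 Y0 Y1 : T -> bool).
Hypotheses (mZ : bin_rv Z) (mR0 : bin_rv R0) (mR1 : bin_rv R1).
Hypotheses (mY0 : bin_rv Y0) (mY1 : bin_rv Y1).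

Let W t := (R0 t, R1 t, Y0 t, Y1 t).

Lemma lowR_highY_setI_arm (b : bool) :
  [set t | ~~ obsR Z R0 R1 t /\ obsY Z R0 R1 Y0 Y1 t] `&` Z @^-1` [set b] =
  ([set t | Y0 t] `\` [set t | if b then R1 t else R0 t]) `&` Z @^-1` [set b].
Proof.
rewrite /obsY /obsR; apply/seteqP; split=> t [+ Zb];
  have {}Zb : Z t = b := Zb; rewrite /= Zb;
  by case: b {Zb}; case: (R0 t); case: (R1 t); case: (Y0 t) => //=; intuition.
Qed.

Lemma condpr_lowR_highY (b : bool) :
  indep_rv P Z W -> pr P (Z @^-1` [set b]) != 0 ->
  condpr P [set t | ~~ obsR Z R0 R1 t /\ obsY Z R0 R1 Y0 Y1 t] (Z @^-1` [set b]) =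
  pr P ([set t | Y0 t] `\` [set t | if b then R1 t else R0 t]).
Proof.
move=> rand pZb; rewrite /condpr lowR_highY_setI_arm.
have mD : measurable ([set t | Y0 t] `\` [set t | if b then R1 t else R0 t]).
  by apply: measurableD => //; case: (b).
exact: (condpr_indep_rv P Z W [set b]
  [set w : bool * bool * bool * bool | w.1.2 /\ ~ (if b then w.1.1.2 else w.1.1.1)]
  rand (bin_rv_preimage b mZ) mD pZb).
Qed.

Lemma APCE_AH_monotone : P [set t | Y0 t && ~~ Y1 t] = 0%E ->
  APCE P R0 R1 (AH Y0 Y1) =
  (pr P ([set t | R1 t] `&` [set t | Y0 t])
   - pr P ([set t | R0 t] `&` [set t | Y0 t])) / pr P [set t | Y0 t].
Proof.
move=> mono.
have null : pr P ([set t | Y0 t] `\` [set t | Y1 t]) = 0.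
  rewrite /pr -[0]/(fine 0%E) -mono; congr (fine (P _)).
  by apply/seteqP; split=> t /=; [case=> -> /negP | case/andP=> -> /negP].
have -> : AH Y0 Y1 = [set t | Y0 t] `&` [set t | Y1 t] by [].
rewrite /APCE cond_exp_natB //; last exact: measurableI.
rewrite !pr_setI_null_setD //.
by rewrite [in RHS](pr_setDI P mY0 mY1) null add0r.
Qed.

End encouragement_design.

Theorem mainTheorem3 (d : measure_display) (T : measurableType d) (R : realType)
  (P : probability T R) (Z R0 R1 Y0 Y1 : T -> bool)
  (mZ : bin_rv Z) (mR0 : bin_rv R0) (mR1 : bin_rv R1)
  (mY0 : bin_rv Y0) (mY1 : bin_rv Y1)
  (pZ : 0 < pr P [set t | Z t] < 1)
  (rand : indep_rv P Z (fun t => (R0 t, R1 t, Y0 t, Y1 t)))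
  (mono : P [set t | Y0 t && ~~ Y1 t] = 0%E)
  (pY0 : 0 < pr P [set t | Y0 t]) :
  APCE P R0 R1 (AH Y0 Y1) =
    (condpr P [set t | ~~ obsR Z R0 R1 t /\ obsY Z R0 R1 Y0 Y1 t] [set t | ~~ Z t]
     - condpr P [set t | ~~ obsR Z R0 R1 t /\ obsY Z R0 R1 Y0 Y1 t] [set t | Z t])
    / pr P [set t | Y0 t].
Proof.
case/andP: pZ => pZ1_gt0 pZ1_lt1.
have pZ1 : pr P (Z @^-1` [set true]) != 0 by rewrite gt_eqF.
have pZ0 : pr P (Z @^-1` [set false]) != 0.
  by rewrite preimage_bool_false pr_setC // subr_eq0 eq_sym lt_eqF.
have -> : [set t | ~~ Z t] = Z @^-1` [set false].
  by apply/seteqP; split=> t /=; case: (Z t).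
rewrite -[[set t | Z t]]/(Z @^-1` [set true]) !condpr_lowR_highY //.
rewrite APCE_AH_monotone //; congr (_ / _).
have := pr_setDI P mY0 mR0; have := pr_setDI P mY0 mR1.
rewrite ![[set t | _] `&` [set t | Y0 t]]setIC; lra.
Qed.
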